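(* Let $s\ge1$, let $f_1,\dots,f_s\in\mathfrak{M}\setminus\{0\}$, and let $Z=\{z_1,\dots,z_s\}$ be a set of $s$ distinct indeterminates in $X$. The following are equivalent: (a) The tuple $(f_1,\dots,f_s)$ is coherently $Z$-separating. (b) For every term ordering $\sigma$ with $z_i=\mathrm{LT}_\sigma(f_i)$ for $i=1,\dots,s$, the reduced $\sigma$-Gröbner basis of $\langle f_1,\dots,f_s\rangle$ is $\{\frac1{c_1}f_1,\dots,\frac1{c_s}f_s\}$, where $c_i=\mathrm{LC}_\sigma(f_i)$. (c) For every proper ideal $I$ of $P$ containing $f_1,\dots,f_s$ and every term ordering $\sigma$ with $z_i=\mathrm{LT}_\sigma(f_i)$ for $i=1,\dots,s$, the ideal $I$ has a $\sigma$-Gröbner basis of the form $\{\frac1{c_1}f_1,\dots,\frac1{c_s}f_s,g_1,\dots,g_t\}$, where $c_i=\mathrm{LC}_\sigma(f_i)$, where $\{\frac1{c_1}f_1,\dots,\frac1{c_s}f_s\}$ is the reduced $\sigma$-Gröbner basis of $\langle f_1,\dots,f_s\rangle$, and where $\{g_1,\dots,g_t\}$ is the reduced $\hat\sigma$-Gröbner basis of $I\cap\widehat P$.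
   Context: $K$ is a field, $P=K[x_1,\dots,x_n]$, $X=\{x_1,\dots,x_n\}$, $\mathfrak{M}=\langle x_1,\dots,x_n\rangle$. For $Z\subseteq X$, $\widehat P=K[X\setminus Z]$, and for a term ordering $\sigma$ on $P$, $\hat\sigma$ denotes its restriction to $\widehat P$. For $f\in P$, $\mathrm{indets}(f)$ is the set of indeterminates dividing at least one term in the support of $f$. For $f\in\mathfrak{M}$, $\mathrm{Lin}_{\mathfrak{M}}(f)$ is the homogeneous degree-one part of $f$. If $\mathrm{Lin}_{\mathfrak{M}}(f)\neq0$, $z\in\mathrm{indets}(\mathrm{Lin}_{\mathfrak{M}}(f))$ and $c\ne0$ is the coefficient of $z$ in $f$, the $z$-tail of $f$ is $\mathrm{tail}_z(f)=z-\frac1c f$; $f$ is called $z$-separating if $z\notin\mathrm{indets}(\mathrm{tail}_z(f))$. A tuple $(f_1,\dots,f_s)$ of nonzero elements of $\mathfrak{M}$ is coherently $Z$-separating, for $Z=\{z_1,\dots,z_s\}$ distinct indeterminates, if for every $i$: $f_i$ is $z_i$-separating, and $z_i\notin\mathrm{indets}(f_j)$ for all $j\ne i$.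
   Formalization: Conditions (b) and (c) each also assert that some term ordering σ with $z_i=\mathrm{LT}_\sigma(f_i)$ for i=1,…,s exists, in addition to the clause for every such σ. The statement above fails without it. *)

From HB Require Import structures.
From mathcomp Require Import all_boot all_order all_algebra.
From mathcomp Require Export mpoly.

Set Implicit Arguments.
Unset Strict Implicit.
Unset Printing Implicit Defensive.

Import Order.TTheory GRing.Theory.
Local Open Scope ring_scope.

Section Defs.
Variables (K : fieldType) (n : nat).
Local Notation P := {mpoly K[n]}.
Local Notation mon := 'X_{1..n}.

Definition term_ordering (le : rel mon) : Prop :=
  [/\ reflexive le, antisymmetric le, transitive le & total le] /\
  (forall m1 m2 m : mon, le m1 m2 -> le (m1 + m)%MM (m2 + m)%MM) /\
  (forall m : mon, le 0%MM m).

(* Leading term LT_sigma(f): the sigma-largest term in the support of f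
   (for f = 0 this is the default value 1 = 0%MM). *)
Definition LT (le : rel mon) (f : P) : mon :=
  foldr (fun m acc => if le acc m then m else acc) 0%MM (msupp f).

Definition LC (le : rel mon) (f : P) : K := f@_(LT le f).

(* The maximal ideal M = <x_1,...,x_n>: polynomials with zero constant term. *)
Definition in_M (f : P) : Prop := f@_0%MM = 0.

Definition indets (f : P) (i : 'I_n) : Prop :=
  exists2 m, m \in msupp f & (0 < m i)%N.

Definition Lin (f : P) : P := \sum_(i < n) f@_(U_(i))%MM *: 'X_i.

Definition ztail (z : 'I_n) (f : P) : P := 'X_z - (f@_(U_(z))%MM)^-1 *: f.

Definition separating (z : 'I_n) (f : P) : Prop :=
  [/\ Lin f != 0, indets (Lin f) z & ~ indets (ztail z f) z].

Definition coherently_separating (s : nat) (z : 'I_s -> 'I_n)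
  (f : 'I_s -> P) : Prop :=
  forall i : 'I_s, separating (z i) (f i) /\
     (forall j : 'I_s, j != i -> ~ indets (f j) (z i)).

Definition is_ideal (I : P -> Prop) : Prop :=
  [/\ I 0, (forall f g, I f -> I g -> I (f + g))
    & (forall h f, I f -> I (h * f))].

Definition is_proper_ideal (I : P -> Prop) : Prop := is_ideal I /\ ~ I 1.

Definition ideal_gen (s : nat) (f : 'I_s -> P) (p : P) : Prop :=
  exists h : 'I_s -> P, p = \sum_(i < s) h i * f i.

(* The subring Phat = K[X \ Z], and I cap Phat. *)
Definition in_Phat (s : nat) (z : 'I_s -> 'I_n) (p : P) : Prop :=
  forall i : 'I_s, ~ indets p (z i).

Definition restrict_Phat (s : nat) (z : 'I_s -> 'I_n) (I : P -> Prop) (p : P)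
  : Prop := I p /\ in_Phat z p.

Definition is_GB (le : rel mon) (I : P -> Prop) (G : seq P) : Prop :=
  (forall g, g \in G -> I g /\ g != 0) /\
  (forall p, I p -> p != 0 -> exists2 g, g \in G & (LT le g <= LT le p)%MM).

(* G is the reduced sigma-Groebner basis of I (as a set: no repetitions). *)
Definition is_reduced_GB (le : rel mon) (I : P -> Prop) (G : seq P) : Prop :=
  [/\ is_GB le I G, uniq G,
      (forall g, g \in G -> LC le g = 1)
    & (forall g g', g \in G -> g' \in G -> g' != g ->
         forall m, m \in msupp g -> ~~ (LT le g' <= m)%MM)].

End Defs.

From HB Require Import structures.
From mathcomp Require Import all_boot all_order all_algebra.
From mathcomp Require Import mpoly.
From Stdlib Require Import Classical.
Import Order.TTheory GRing.Theory.
Local Open Scope ring_scope.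

(* Under coherent separation the substitution
   z_i |-> tail(f_i) shows that <f> meets Phat only in 0, so reduction modulo
   the f_i proves that every nonzero element of <f> has a leading term
   involving Z; this gives (a) -> (b), an elimination ordering providing the
   required term ordering. Conversely, reducedness of the normalized f_i
   forces separation, (b) -> (a). For (b) -> (c), elements of I whose leading
   term avoids Z reduce to elements of I cap Phat with the same leading term;
   (c) -> (b) takes I = <f>, which is proper since no f_i has a constant
   term. *)

Set Implicit Arguments.
Unset Strict Implicit.
Unset Printing Implicit Defensive.

Section Dickson.
Variable n : nat.
Local Notation mon := 'X_{1..n}.

Definition below_on (D : seq 'I_n) (a b : mon) := all (fun i => a i <= b i)%N D.

Lemma dickson_on D (S : mon -> Prop) : exists F : seq mon,
  (forall x, x \in F -> S x) /\ (forall s, S s -> exists2 x, x \in F & below_on D x s).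
Proof.
elim: D S => [|i D IH] S.
  have [[s Ss]|noS] := classic (exists s, S s); last first.
    by exists [::]; split=> // s Ss; case: noS; exists s.
  by exists [:: s]; split=> [x /[!inE] /eqP->|t _] //; exists s; rewrite ?inE.
have [F0 [F0S F0P]] := IH S.
pose bound := (\max_(x <- F0) x i)%N.
(* the terms whose i-th exponent is below k are handled slice by slice *)
have slices k : exists G : seq mon, (forall x, x \in G -> S x) /\
    (forall s, S s -> (s i < k)%N -> exists2 x, x \in G & below_on (i :: D) x s).
  elim: k => [|k [G [GS GP]]]; first by exists [::].
  have [Fk [FkS FkP]] := IH (fun s => S s /\ s i = k).
  exists (G ++ Fk); split=> [x|s Ss]; first by rewrite mem_cat => /orP[/GS|/FkS[]].
  rewrite ltnS leq_eqVlt => /orP[/eqP si|/(GP _ Ss)[x xG xs]]; last first.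
    by exists x; rewrite // mem_cat xG.
  have [x xFk xs] := FkP s (conj Ss si); exists x; first by rewrite mem_cat xFk orbT.
  by rewrite /= xs andbT; have [_ ->] := FkS x xFk; rewrite si.
have [G [GS GP]] := slices bound.
exists (F0 ++ G); split=> [x|s Ss]; first by rewrite mem_cat => /orP[/F0S|/GS].
have [/(GP _ Ss)[x xG xs]|bound_s] := ltnP (s i) bound.
  by exists x; rewrite // mem_cat xG orbT.
have [x xF0 xs] := F0P s Ss; exists x; first by rewrite mem_cat xF0.
rewrite /= xs andbT (leq_trans _ bound_s) //.
exact: (@leq_bigmax_seq _ F0 xpredT (fun x : mon => x i) x xF0 isT).
Qed.

Lemma dickson (S : mon -> Prop) : exists F : seq mon,
  (forall x, x \in F -> S x) /\ (forall s, S s -> exists2 x, x \in F & (x <= s)%MM).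
Proof.
have [F [FS FP]] := dickson_on (enum 'I_n) S; exists F; split=> // s /FP[x xF xs].
by exists x => //; apply/mnm_lepP => i; apply: (allP xs); rewrite mem_enum.
Qed.

End Dickson.

Section TermOrdering.
Variables (n : nat) (le : rel 'X_{1..n}).
Hypothesis Hle : term_ordering le.
Local Notation mon := 'X_{1..n}.

Lemma tord_refl m : le m m.
Proof. by case: Hle => -[? _ _ _] _. Qed.

Lemma tord_anti a b : le a b -> le b a -> a = b.
Proof. by case: Hle => -[_ anti _ _] _ ab ba; apply: anti; rewrite ab ba. Qed.

Lemma tord_trans a b c : le a b -> le b c -> le a c.
Proof. by case: Hle => -[_ _ trans _] _; apply: trans. Qed.

Lemma tord_total a b : ~~ le a b -> le b a.
Proof. by case: Hle => -[_ _ _ tot] _; have := tot a b; case: (le a b). Qed.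

Lemma tord_addl a b m : le a b -> le (m + a)%MM (m + b)%MM.
Proof. by case: Hle => _ [addr _]; rewrite ![(m + _)%MM]addmC; apply: addr. Qed.

Lemma tord0 m : le 0%MM m.
Proof. by case: Hle => _ []. Qed.

Lemma tord_div a b : (a <= b)%MM -> le a b.
Proof.
by move=> ab; rewrite -(submK ab) addmC -{1}[a]addm0; apply: tord_addl; apply: tord0.
Qed.

Definition tlt (a b : mon) := le a b && (a != b).

Lemma tlt_le_trans a b c : tlt a b -> le b c -> tlt a c.
Proof.
case/andP=> ab neq bc; rewrite /tlt (tord_trans ab bc).
by apply: contraNneq neq => ac; apply/eqP/tord_anti => //; rewrite ac.
Qed.

(* LT le p is by definition the maximum of the support of p computed by this
   fold. *)
Definition max_term (s : seq mon) :=
  foldr (fun m acc => if le acc m then m else acc) 0%MM s.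

Lemma max_term_ub s m : m \in s -> le m (max_term s).
Proof.
elim: s => [//|x s IH]; rewrite inE /= => /orP[/eqP->|ms].
  by case: ifP => [_|/negbT]; [apply: tord_refl|apply: tord_total].
by case: ifP => [le_x|_]; [apply: tord_trans (IH ms) le_x|apply: IH].
Qed.

Lemma max_term_mem s : s != [::] -> max_term s \in s.
Proof.
elim: s => [//|x s IH] _ /=; case: ifP => [_|nle]; first exact: mem_head.
case: s IH nle => [_|y s IH _]; first by rewrite /= tord0.
by rewrite inE IH ?orbT.
Qed.

Lemma seq_min (s : seq mon) : s != [::] -> exists2 x, x \in s & forall y, y \in s -> le x y.
Proof.
elim: s => [//|a s IH] _; have [->|/IH [x xs xmin]] := eqVneq s [::].
  by exists a; rewrite ?inE // => y /[!inE] /eqP->; apply: tord_refl.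
have [ax|xa] := boolP (le a x).
  exists a; first exact: mem_head.
  by move=> y /[!inE] /orP[/eqP->|/xmin]; [apply: tord_refl|apply: tord_trans].
exists x; first by rewrite inE xs orbT.
by move=> y /[!inE] /orP[/eqP->|/xmin //]; apply: tord_total.
Qed.

(* By Dickson's lemma every nonempty set of terms has a least element. *)
Lemma tord_min (S : mon -> Prop) : (exists s, S s) ->
  exists2 x, S x & forall y, S y -> le x y.
Proof.
move=> [s Ss]; have [F [FS FP]] := dickson S; have [y yF _] := FP s Ss.
have [|x xF xmin] := @seq_min F; first by apply: contraTneq yF => ->.
exists x; first exact: FS.
by move=> t /FP [w wF wt]; apply: tord_trans (xmin _ wF) (tord_div wt).
Qed.

Lemma tlt_wf : well_founded tlt.
Proof.
move=> x; apply: NNPP => notAcc.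
have [y notAcc_y ymin] := @tord_min (fun y => ~ Acc tlt y) (ex_intro _ x notAcc).
apply: notAcc_y; constructor => t /andP[ty neq]; apply: NNPP => notAcc_t.
by case/eqP: neq; apply: tord_anti ty (ymin _ notAcc_t).
Qed.

Definition div_minimal (F : seq mon) (t : mon) :=
  all (fun t' => (t' <= t)%MM ==> (t' == t)) F.

(* If some element of F divides s, then so does a divisibility-minimal one:
   take the le-least element of F dividing s. *)
Lemma div_minimal_exists F s : (exists2 x, x \in F & (x <= s)%MM) ->
  exists2 t, (t \in F) && div_minimal F t & (t <= s)%MM.
Proof.
move=> [x xF xs]; pose D := filter (fun t => t <= s)%MM F.
have [|t tD tmin] := @seq_min D.
  by apply: contraTneq (_ : x \in D) => [->|]; rewrite // mem_filter xs xF.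
move: tD; rewrite mem_filter => /andP[ts tF]; exists t => //; rewrite tF /=.
apply/allP => t' t'F; apply/implyP => t't; apply/eqP/tord_anti; first exact: tord_div.
by apply: tmin; rewrite mem_filter t'F (lepm_trans t't ts).
Qed.

Section LeadingTerm.
Variable K : fieldType.
Implicit Types p r : {mpoly K[n]}.

Lemma LT_max p m : m \in msupp p -> le m (LT le p).
Proof. exact: max_term_ub. Qed.

Lemma LT_supp p : p != 0 -> LT le p \in msupp p.
Proof. by move=> p0; apply: max_term_mem; rewrite msupp_eq0. Qed.

Lemma LC_neq0 p : p != 0 -> LC le p != 0.
Proof. by move=> /LT_supp; rewrite mcoeff_msupp. Qed.

Lemma LC_eq1_neq0 p : LC le p = 1 -> p != 0.
Proof. by apply: contra_eq_neq => ->; rewrite /LC mcoeff0 eq_sym oner_neq0. Qed.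

Lemma coef_above_LT p m : tlt (LT le p) m -> p@_m = 0.
Proof.
case/andP=> le_m neq; apply/eqP; rewrite mcoeff_eq0; apply: contra neq => /LT_max.
by move=> le_LT; rewrite (tord_anti le_m le_LT).
Qed.

Lemma LT_char r t : r@_t != 0 -> (forall m, tlt t m -> r@_m = 0) -> LT le r = t.
Proof.
move=> rt0 above; have r0 : r != 0 by apply: contraNneq rt0 => ->; rewrite mcoeff0.
apply/tord_anti; last by apply: LT_max; rewrite mcoeff_msupp.
apply: contraT => nle; move: (LT_supp r0); rewrite mcoeff_msupp above ?eqxx //.
by rewrite /tlt tord_total //; apply: contraNneq nle => ->; apply: tord_refl.
Qed.

Lemma LTZ (c : K) p : c != 0 -> LT le (c *: p) = LT le p.
Proof.
move=> c0; have [->|p0] := eqVneq p 0; first by rewrite scaler0.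
apply: LT_char => [|m above]; first by rewrite mcoeffZ mulf_neq0 ?LC_neq0.
by rewrite mcoeffZ coef_above_LT ?mulr0.
Qed.

Lemma LCZ (c : K) p : c != 0 -> LC le (c *: p) = c * LC le p.
Proof. by move=> c0; rewrite /LC LTZ // mcoeffZ. Qed.

Lemma mcoeff_shift (h : {mpoly K[n]}) t m : (t <= m)%MM -> ('X_[m - t] * h)@_m = h@_t.
Proof. by move=> tm; rewrite mulrC -[X in mcoeff X _](submK tm) mcoeffMX. Qed.

Lemma msupp_shift (h : {mpoly K[n]}) u m : m \in msupp ('X_[u] * h) ->
  exists2 k, k \in msupp h & m = (u + k)%MM.
Proof. by rewrite mulrC (perm_mem (msuppMX h u)) => /mapP [k kh ->]; exists k. Qed.

Lemma le_shift_LT (h : {mpoly K[n]}) u m : m \in msupp ('X_[u] * h) ->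
  le m (u + LT le h)%MM.
Proof. by case/msupp_shift=> k kh ->; apply: tord_addl; apply: LT_max. Qed.

End LeadingTerm.
End TermOrdering.

(* Reduction modulo a finite family G of monic polynomials: every term
   declared "bad" is divisible by a leading term of G, and Q is a property
   preserved by the elementary reduction steps. Any p satisfying Q reduces
   to some r satisfying Q that has no bad term and that has the same
   coefficients as p above all bad terms of p. The argument is a
   well-founded induction on the largest bad term. *)
Section Reduction.
Variables (n : nat) (le : rel 'X_{1..n}).
Hypothesis Hle : term_ordering le.
Variable K : fieldType.
Local Notation mon := 'X_{1..n}.
Local Notation P := {mpoly K[n]}.
Variable G : seq P.
Hypothesis G_monic : forall g, g \in G -> LC le g = 1.
Variable bad : pred mon.
Hypothesis bad_divisible : forall m, bad m -> has (fun g => LT le g <= m)%MM G.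
Variable Q : P -> Prop.
Hypothesis Q_step : forall p g m, Q p -> g \in G -> m \in msupp p -> bad m ->
  (LT le g <= m)%MM -> Q (p - p@_m *: ('X_[m - LT le g] * g)).

Definition reducer_of (m : mon) := nth 0 G (find (fun g => LT le g <= m)%MM G).
Definition reducer (m : mon) := 'X_[m - LT le (reducer_of m)] * reducer_of m.

Lemma reducer_ofP m : bad m -> reducer_of m \in G /\ (LT le (reducer_of m) <= m)%MM.
Proof.
move/bad_divisible=> hasG; split; first by rewrite mem_nth // -has_find.
exact: nth_find hasG.
Qed.

Lemma reducer_coef m : bad m -> (reducer m)@_m = 1.
Proof.
by case/reducer_ofP=> inG div; rewrite mcoeff_shift //; apply: G_monic.
Qed.

Lemma reducer_supp m m' : bad m -> m' \in msupp (reducer m) -> le m' m.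
Proof. by case/reducer_ofP=> _ div /(le_shift_LT Hle); rewrite submK. Qed.

Definition bad_below (p : P) (m : mon) :=
  forall m', m' \in msupp p -> bad m' -> tlt le m' m.

Definition reduces_to (p r : P) :=
  [/\ Q r, forall m, m \in msupp r -> ~~ bad m
    & forall m, bad_below p m -> r@_m = p@_m].

Definition is_max_bad (p : P) (m : mon) :=
  [/\ m \in msupp p, bad m & forall m', m' \in msupp p -> bad m' -> le m' m].

Lemma max_bad_cases p :
  (forall m, m \in msupp p -> ~~ bad m) \/ exists m, is_max_bad p m.
Proof.
have [hasbad|nobad] := boolP (has bad (msupp p)); last first.
  by left=> m mp; apply: contra nobad => bm; apply/hasP; exists m.
right; have nil_bad : filter bad (msupp p) != [::] by rewrite -has_filter.
move: (max_term_mem Hle nil_bad); rewrite mem_filter => /andP[bm mp].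
exists (max_term le (filter bad (msupp p))); split=> // m' m'p bm'.
by apply: (max_term_ub Hle); rewrite mem_filter bm' m'p.
Qed.

Definition red_step (p : P) (m : mon) := p - p@_m *: reducer m.

Lemma red_step_Q p m : Q p -> is_max_bad p m -> Q (red_step p m).
Proof.
by move=> Qp [mp bm _]; have [inG div] := reducer_ofP bm; apply: Q_step.
Qed.

Lemma red_step_bad_below p m : is_max_bad p m -> bad_below (red_step p m) m.
Proof.
move=> [mp bm pmax] m'; rewrite mcoeff_msupp mcoeffB mcoeffZ => nz bm'.
rewrite /tlt; have [eq_m|neq] := eqVneq m' m.
  by move: nz; rewrite eq_m reducer_coef // mulr1 subrr eqxx.
rewrite andbT; have [r0|rnz] := eqVneq (reducer m)@_m' 0.
  by apply: pmax bm'; rewrite mcoeff_msupp; rewrite r0 mulr0 subr0 in nz.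
by apply: reducer_supp bm _; rewrite mcoeff_msupp.
Qed.

Lemma reduces_to_step p m r :
  is_max_bad p m -> reduces_to (red_step p m) r -> reduces_to p r.
Proof.
move=> pm [Qr nobad agree]; split=> // m0 below0; have [mp bm _] := pm.
have lt_m : tlt le m m0 := below0 m mp bm.
rewrite agree; last first.
  move=> m' m'p bm'; apply: tlt_le_trans (red_step_bad_below pm m'p bm') _ => //.
  by case/andP: lt_m.
rewrite /red_step mcoeffB mcoeffZ; have [->|] := eqVneq (reducer m)@_m0 0.
  by rewrite mulr0 subr0.
rewrite -mcoeff_msupp => /(reducer_supp bm) le_m0; case/andP: lt_m => le_m.
by rewrite (tord_anti Hle le_m le_m0) eqxx.
Qed.

Lemma reduction_max m : forall p, Q p -> is_max_bad p m -> exists r, reduces_to p r.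
Proof.
elim/(well_founded_induction (tlt_wf Hle)): m => m IH p Qp pm.
have Qp' := red_step_Q Qp pm; have below := red_step_bad_below pm.
suff [r red'] : exists r, reduces_to (red_step p m) r.
  by exists r; apply: reduces_to_step red'.
case: (max_bad_cases (red_step p m)) => [nobad|[m2 m2max]].
  by exists (red_step p m); split.
by apply: (IH m2 _ _ Qp' m2max); case: m2max => m2p bm2 _; apply: below.
Qed.

Theorem reduction p : Q p -> exists r, reduces_to p r.
Proof.
move=> Qp; case: (max_bad_cases p) => [nobad|[m pm]]; last exact: reduction_max pm.
by exists p; split.
Qed.

Lemma reduction_LT p r : reduces_to p r -> p != 0 -> ~~ bad (LT le p) ->
  LT le r = LT le p /\ LC le r = LC le p.
Proof.
move=> [_ _ agree] p0 goodLT.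
have agree_above m : le (LT le p) m -> r@_m = p@_m.
  move=> le_m; apply: agree => m' m'p bm'; apply: tlt_le_trans le_m => //.
  by rewrite /tlt LT_max //; apply: contraNneq goodLT => <-.
have rLT : r@_(LT le p) = LC le p by rewrite agree_above ?tord_refl.
suff LTr : LT le r = LT le p by rewrite /LC LTr.
apply: (LT_char Hle) => [|m above]; first by rewrite rLT LC_neq0.
by rewrite agree_above ?(coef_above_LT Hle above) //; case/andP: above.
Qed.

End Reduction.

Lemma fin_choice (A : eqType) (B : Type) (b0 : B) (R : A -> B -> Prop) (L : seq A) :
  (forall x, x \in L -> exists y, R x y) -> exists g : A -> B, forall x, x \in L -> R x (g x).
Proof.
elim: L => [|a L IH] hR; first by exists (fun=> b0).
have [b Rab] := hR a (mem_head _ _).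
have [g Rg] := IH (fun x xL => hR x (mem_behead (s := a :: L) xL)).
exists (fun x => if x == a then b else g x) => x; rewrite inE.
by case: eqP => [->|_ /= /Rg].
Qed.

Section Phat.
Variables (K : fieldType) (n s : nat) (z : 'I_s -> 'I_n).

Lemma not_indets_term (p : {mpoly K[n]}) k m : ~ indets p k -> m \in msupp p -> m k = 0%N.
Proof. by move=> notk mp; apply/eqP; rewrite -leqn0 leqNgt; apply: contra_notN notk => ?; exists m. Qed.

Lemma Phat_term (p : {mpoly K[n]}) i m : in_Phat z p -> m \in msupp p -> m (z i) = 0%N.
Proof. by move=> /(_ i); apply: not_indets_term. Qed.

Lemma Phat_supp (p : {mpoly K[n]}) : (forall i m, m \in msupp p -> m (z i) = 0%N) -> in_Phat z p.
Proof. by move=> h i [m /h ->]. Qed.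

Lemma Phat_sub (p q : {mpoly K[n]}) : in_Phat z p -> in_Phat z q -> in_Phat z (p - q).
Proof.
move=> pPhat qPhat; apply: Phat_supp => i m /msuppB_le; rewrite mem_cat.
by case/orP; [apply: Phat_term|apply: Phat_term].
Qed.

Lemma Phat_scale (c : K) (p : {mpoly K[n]}) : in_Phat z p -> in_Phat z (c *: p).
Proof. by move=> pPhat; apply: Phat_supp => i m /msuppZ_le; apply: Phat_term. Qed.

Lemma Phat_mulX (u : 'X_{1..n}) (p : {mpoly K[n]}) : (forall i, u (z i) = 0%N) ->
  in_Phat z p -> in_Phat z ('X_[u] * p).
Proof.
move=> uPhat pPhat; apply: Phat_supp => i m /msupp_shift [k kp ->].
by rewrite mnmDE uPhat (Phat_term i pPhat kp).
Qed.

End Phat.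

(* Existence of the reduced Groebner basis for an ideal J of the subring
   Phat = K[X \ Z] (J is viewed inside P; Z may be empty). Dickson's lemma
   gives finitely many divisibility-minimal leading terms of J; monic elements
   of J with these leading terms are then reduced modulo each other. *)
Section ReducedBasis.
Variables (n s : nat) (z : 'I_s -> 'I_n) (le : rel 'X_{1..n}).
Hypothesis Hle : term_ordering le.
Variable K : fieldType.
Local Notation mon := 'X_{1..n}.
Local Notation P := {mpoly K[n]}.
Variable J : P -> Prop.
Hypothesis J_sub : forall p q, J p -> J q -> J (p - q).
Hypothesis J_scale : forall (c : K) p, J p -> J (c *: p).
Hypothesis J_mul : forall (u : mon) p, (forall i, u (z i) = 0%N) -> J p -> J ('X_[u] * p).
Hypothesis J_Phat : forall p, J p -> in_Phat z p.

Definition LT_set (t : mon) := exists p, [/\ J p, p != 0 & LT le p = t].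

Lemma monic_of_LT t : LT_set t -> exists h, [/\ J h, LT le h = t & LC le h = 1].
Proof.
case=> p [Jp p0 <-]; have c0 : (LC le p)^-1 != 0 by rewrite invr_eq0 LC_neq0.
exists ((LC le p)^-1 *: p); split; first exact: J_scale.
  exact: LTZ.
by rewrite (LCZ Hle _ c0) mulVf ?LC_neq0.
Qed.

Lemma reduce_generator (H : seq P) h :
  (forall g, g \in H -> J g /\ LC le g = 1) -> J h -> LC le h = 1 ->
  exists g, [/\ J g, LT le g = LT le h, LC le g = 1 &
    forall m, m \in msupp g -> m != LT le h -> forall g', g' \in H -> ~~ (LT le g' <= m)%MM].
Proof.
move=> HJ Jh LCh; pose bad m := (m != LT le h) && has (fun g => LT le g <= m)%MM H.
have Q_step p g m : J p -> g \in H -> m \in msupp p -> bad m -> (LT le g <= m)%MM ->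
    J (p - p@_m *: ('X_[m - LT le g] * g)).
  move=> Jp gH mp _ div; apply/J_sub/J_scale/J_mul => //; last by case: (HJ g gH).
  by move=> i; rewrite mnmBE (Phat_term i (J_Phat Jp) mp).
have H_monic g : g \in H -> LC le g = 1 by case/HJ.
have bad_div m : bad m -> has (fun g => LT le g <= m)%MM H by case/andP.
have [r red] := reduction Hle H_monic bad_div Q_step Jh.
have LTh_good : ~~ bad (LT le h) by rewrite /bad eqxx.
have [LTr LCr] := reduction_LT Hle red (LC_eq1_neq0 LCh) LTh_good.
case: red => Jr nobad _; exists r; split; rewrite ?LCr //.
move=> m mr neq g' g'H; apply: contra (nobad m mr) => div.
by rewrite /bad neq; apply/hasP; exists g'.
Qed.

Theorem exists_reduced_GB : exists gs, is_reduced_GB le J gs.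
Proof.
have [F [FS Fbasis]] := dickson LT_set.
pose F' := filter (div_minimal F) (undup F).
have F'P t : t \in F' = (t \in F) && div_minimal F t.
  by rewrite mem_filter mem_undup andbC.
have F'F t : t \in F' -> t \in F by rewrite F'P => /andP[].
have [h hP] := fin_choice 0 (fun t tF' => monic_of_LT (FS t (F'F t tF'))).
have HJ g : g \in map h F' -> J g /\ LC le g = 1.
  by case/mapP=> t tF' ->; have [] := hP t tF'.
have [red redP] := fin_choice 0 (fun t ht =>
  let: And3 Jh _ LCh := hP t ht in reduce_generator HJ Jh LCh).
have LT_red t : t \in F' -> LT le (red t) = t.
  by move=> tF'; have [_ -> _ _] := redP t tF'; have [_ -> _] := hP t tF'.
exists (map red F'); split.
- split=> [g /mapP [t tF' ->]|p Jp p0].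
    by have [Jg _ LCg _] := redP t tF'; split; last exact: (LC_eq1_neq0 LCg).
  have [x xF xp] := Fbasis _ (ex_intro _ p (And3 Jp p0 erefl)).
  have [t tF' tp] := div_minimal_exists Hle (ex_intro2 _ _ x xF xp).
  by rewrite -F'P in tF'; exists (red t); rewrite ?map_f ?LT_red.
- rewrite map_inj_in_uniq ?filter_uniq ?undup_uniq // => t t' tF' t'F' eq_red.
  by rewrite -(LT_red t tF') eq_red LT_red.
- by move=> g /mapP [t tF' ->]; have [] := redP t tF'.
move=> g g' /mapP [t tF' ->] /mapP [t' t'F' ->] neq m mg.
have [[_ LTh _] [_ LTh' _]] := (hP t tF', hP t' t'F').
have [_ _ _ reduced] := redP t tF'; rewrite LT_red // -LTh'.
have [->|neq_m] := eqVneq m (LT le (h t)); last exact: reduced m mg neq_m _ (map_f h t'F').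
rewrite LTh LTh'; apply: contraNN neq => t't.
move: tF' t'F'; rewrite !F'P => /andP[_ /allP tmin] /andP[t'F _].
by rewrite (eqP (implyP (tmin t' t'F) t't)).
Qed.

End ReducedBasis.

Section Ideals.
Variables (K : fieldType) (n : nat).
Local Notation P := {mpoly K[n]}.

Section IdealClosure.
Variable I : P -> Prop.
Hypothesis II : is_ideal I.

Lemma idealD p q : I p -> I q -> I (p + q).
Proof. by case: II => _ ID _; apply: ID. Qed.

Lemma idealM h p : I p -> I (h * p).
Proof. by case: II => _ _ IM; apply: IM. Qed.

Lemma idealZ (c : K) p : I p -> I (c *: p).
Proof. by rewrite -mul_mpolyC; apply: idealM. Qed.

Lemma idealB p q : I p -> I q -> I (p - q).
Proof. by move=> Ip Iq; rewrite -scaleN1r; apply/idealD/idealZ. Qed.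

End IdealClosure.

Variables (s : nat) (f : 'I_s -> P).

Lemma ideal_gen_ideal : is_ideal (ideal_gen f).
Proof.
split; first by exists (fun=> 0); rewrite big1 // => i _; rewrite mul0r.
  move=> _ _ [a ->] [b ->]; exists (fun i => a i + b i).
  by rewrite -big_split; apply: eq_bigr => i _; rewrite mulrDl.
move=> h _ [a ->]; exists (fun i => h * a i).
by rewrite mulr_sumr; apply: eq_bigr => i _; rewrite mulrA.
Qed.

Lemma ideal_gen_f i : ideal_gen f (f i).
Proof.
exists (fun j => (j == i)%:R); rewrite (bigD1 i) //= eqxx mul1r big1 ?addr0 //.
by move=> j /negbTE ->; rewrite mul0r.
Qed.

Lemma ideal_gen_min (I : P -> Prop) : is_ideal I -> (forall i, I (f i)) ->
  forall p, ideal_gen f p -> I p.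
Proof.
move=> II If p [h ->]; apply: (big_ind I) => [|q r|i _]; first by case: II.
  exact: idealD.
exact: idealM.
Qed.

Lemma ideal_gen_proper : (forall i, in_M (f i)) -> is_proper_ideal (ideal_gen f).
Proof.
move=> fM; split=> [|[h]]; first exact: ideal_gen_ideal.
move/(congr1 (mcoeff 0%MM)); rewrite mcoeff1 eqxx raddf_sum big1 => [/eqP|i _].
  by rewrite oner_eq0.
by have [coef0M _] := @mcoeff0_is_multiplicative n K; rewrite /= coef0M (fM i) mulr0.
Qed.

End Ideals.

Section Linear.
Variables (K : fieldType) (n : nat).
Implicit Type g : {mpoly K[n]}.

Lemma Lin_coef g m : (Lin g)@_m = \sum_(i < n) g@_(U_(i))%MM * (U_(i)%MM == m)%:R.
Proof. by rewrite /Lin raddf_sum; apply: eq_bigr => i _ /=; rewrite mcoeffZ mcoeffX. Qed.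

Lemma Lin_coefU g k : (Lin g)@_(U_(k))%MM = g@_(U_(k))%MM.
Proof.
rewrite Lin_coef (bigD1 k) //= eqxx mulr1 big1 ?addr0 // => i ik.
by rewrite eq_mnm1 (negbTE ik) mulr0.
Qed.

Lemma indets_LinP g k : indets (Lin g) k <-> g@_(U_(k))%MM != 0.
Proof.
split=> [[m mLin mk]|nz]; last by exists U_(k)%MM; rewrite ?mcoeff_msupp ?Lin_coefU ?mnm1E ?eqxx.
move: mLin; rewrite mcoeff_msupp Lin_coef (bigD1 k) //= big1 ?addr0 => [nz|i ik].
  by apply: contraNneq nz => ->; rewrite mul0r.
suff -> : (U_(i)%MM == m) = false by rewrite mulr0.
by apply: contraTF mk => /eqP <-; rewrite mnm1E (negbTE ik).
Qed.

Lemma ztail_coef (k : 'I_n) g m :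
  (ztail k g)@_m = (U_(k)%MM == m)%:R - (g@_(U_(k))%MM)^-1 * g@_m.
Proof. by rewrite /ztail mcoeffB mcoeffX mcoeffZ. Qed.

End Linear.

(* Consequences of coherent separation: the tails of the f_i lie in
   Phat = K[X \ Z], so the substitution z_i |-> tail_{z_i}(f_i) is a ring
   endomorphism of P fixing Phat and killing every f_i; hence <f> meets Phat
   only in 0. Moreover an elimination ordering for Z makes z_i the leading
   term of f_i. *)
Section Separating.
Variables (K : fieldType) (n s : nat) (f : 'I_s -> {mpoly K[n]}) (z : 'I_s -> 'I_n).
Hypothesis zinj : injective z.
Local Notation P := {mpoly K[n]}.
Local Notation mon := 'X_{1..n}.

Definition zdeg (m : mon) := (\sum_(i < s) m (z i))%N.

Lemma zdegD a b : zdeg (a + b)%MM = (zdeg a + zdeg b)%N.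
Proof. by rewrite /zdeg -big_split; apply: eq_bigr => i _; rewrite mnmDE. Qed.

Lemma zdegU i : zdeg U_(z i)%MM = 1%N.
Proof.
rewrite /zdeg (bigD1 i) //= mnm1E eqxx big1 // => j ji.
by rewrite mnm1E (inj_eq zinj) eq_sym (negbTE ji).
Qed.

Definition elim_le (a b : mon) :=
  (zdeg a < zdeg b)%N || ((zdeg a == zdeg b) && (a <= b)%O).

Lemma elim_le_term_ordering : term_ordering elim_le.
Proof.
rewrite /elim_le; split; [split|split].
- by move=> m; rewrite eqxx lexx orbT.
- move=> a b /andP[]; case: (ltngtP (zdeg a) (zdeg b)) => //= _ ab ba.
  by apply: le_anti; rewrite ab ba.
- move=> b a c /orP[ab|/andP[/eqP eab ab]] /orP[bc|/andP[/eqP ebc bc]].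
  + by rewrite (ltn_trans ab bc).
  + by rewrite -ebc ab.
  + by rewrite eab bc.
  + by rewrite eab ebc eqxx (le_trans ab bc) orbT.
- by move=> a b; case: (ltngtP (zdeg a) (zdeg b)) => //= _; apply: le_total.
- by move=> a b m; rewrite !zdegD ltn_add2r eqn_add2r lemc_add2l => ab.
- move=> m; rewrite /zdeg big1 => [|i _]; last by rewrite mnm0E.
  by rewrite le0x andbT orbC -leq_eqVlt.
Qed.

Hypothesis Hsep : coherently_separating z f.

Lemma sep_coef_neq0 i : (f i)@_(U_(z i)) != 0.
Proof. by have [[_ /indets_LinP]] := Hsep i. Qed.

Lemma sep_term_off i m j : m \in msupp (f i) -> m != U_(z i)%MM -> m (z j) = 0%N.
Proof.
move=> mf neq; have [->|ji] := eqVneq j i.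
  have [[_ _ noz] _] := Hsep i; apply: (not_indets_term noz).
  have Um : (U_(z i)%MM == m) = false by rewrite eq_sym (negbTE neq).
  rewrite mcoeff_msupp ztail_coef Um sub0r oppr_eq0.
  by rewrite mulf_neq0 ?invr_eq0 ?sep_coef_neq0 -?mcoeff_msupp.
by have [_ noz] := Hsep j; apply: (not_indets_term (noz i _) mf); rewrite eq_sym.
Qed.

Lemma ztail_Phat i : in_Phat z (ztail (z i) (f i)).
Proof.
apply: Phat_supp => j m; rewrite mcoeff_msupp ztail_coef.
have [<-|neq] := eqVneq U_(z i)%MM m.
  by rewrite mulVf ?sep_coef_neq0 // subrr eqxx.
rewrite sub0r oppr_eq0 mulf_eq0 negb_or -mcoeff_msupp => /andP[_ mf].
by apply: sep_term_off mf _; rewrite eq_sym.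
Qed.

Lemma f_decomp i : f i = (f i)@_(U_(z i)) *: ('X_(z i) - ztail (z i) (f i)).
Proof. by rewrite /ztail opprB addrC subrK scalerA mulfV ?scale1r ?sep_coef_neq0. Qed.

Definition subst_tails : n.-tuple P := [tuple
  if [pick j | z j == k] is Some j then ztail (z j) (f j) else 'X_k | k < n].

Lemma subst_tails_z i : tnth subst_tails (z i) = ztail (z i) (f i).
Proof.
rewrite tnth_mktuple; case: pickP => [j /eqP /zinj -> //|/(_ i)].
by rewrite eqxx.
Qed.

Lemma subst_tails_Phat p : in_Phat z p -> comp_mpoly subst_tails p = p.
Proof.
move=> pPhat; rewrite comp_mpolyEX [RHS]mpolyE; apply: eq_big_seq => m mp.
congr (_ *: _); rewrite comp_mpolyX mpolyXE_id; apply: eq_bigr => k _.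
rewrite tnth_mktuple; case: pickP => // j /eqP <-.
by rewrite (Phat_term j pPhat mp) !expr0.
Qed.

Lemma subst_tails_f i : comp_mpoly subst_tails (f i) = 0.
Proof.
rewrite f_decomp comp_mpolyZ comp_mpolyB (subst_tails_Phat (@ztail_Phat i)).
by rewrite comp_mpolyXU -tnth_nth subst_tails_z subrr scaler0.
Qed.

Theorem ideal_gen_Phat p : ideal_gen f p -> in_Phat z p -> p = 0.
Proof.
move=> [h ->] hPhat; rewrite -(subst_tails_Phat hPhat) rmorph_sum big1 // => i _.
by rewrite rmorphM /= subst_tails_f mulr0.
Qed.

Lemma elim_le_LT i : LT elim_le (f i) = U_(z i)%MM.
Proof.
have Hle := elim_le_term_ordering.
apply: (LT_char Hle) => [|m /andP[le_m neq]]; first exact: sep_coef_neq0.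
apply: contraNeq neq => nz; apply/eqP/(tord_anti Hle le_m).
have [->|neq] := eqVneq m U_(z i)%MM; first exact: tord_refl.
rewrite /elim_le zdegU (_ : zdeg m = 0%N) // /zdeg big1 // => j _.
by apply: sep_term_off neq; rewrite mcoeff_msupp.
Qed.

End Separating.

Section ZLeadingTerms.
Variables (K : fieldType) (n s : nat) (f : 'I_s -> {mpoly K[n]}) (z : 'I_s -> 'I_n).
Hypothesis zinj : injective z.
Variable le : rel 'X_{1..n}.
Hypothesis Hle : term_ordering le.
Hypothesis LT_f : forall i, LT le (f i) = U_(z i)%MM.
Hypothesis f_neq0 : forall i, f i != 0.
Local Notation P := {mpoly K[n]}.
Local Notation mon := 'X_{1..n}.

Definition normalized : seq P := [seq (LC le (f i))^-1 *: f i | i <- enum 'I_s].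

Lemma normalized_mem i : (LC le (f i))^-1 *: f i \in normalized.
Proof. by apply: map_f; rewrite mem_enum. Qed.

Lemma LC_f_inv_neq0 i : (LC le (f i))^-1 != 0.
Proof. by rewrite invr_eq0 LC_neq0. Qed.

Lemma LT_normalized i : LT le ((LC le (f i))^-1 *: f i) = U_(z i)%MM.
Proof. by rewrite LTZ ?LC_f_inv_neq0. Qed.

Lemma LC_normalized i : LC le ((LC le (f i))^-1 *: f i) = 1.
Proof. by rewrite LCZ ?LC_f_inv_neq0 // mulVf ?LC_neq0. Qed.

Definition zterm (m : mon) := [exists i, 0 < m (z i)]%N.

Lemma ztermP m : reflect (exists i, U_(z i) <= m)%MM (zterm m).
Proof.
apply: (iffP existsP) => -[i]; exists i; first by rewrite lep1mP -lt0n.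
by rewrite lt0n -lep1mP.
Qed.

Lemma Phat_no_zterm (p : P) : (forall m, m \in msupp p -> ~~ zterm m) -> in_Phat z p.
Proof.
move=> nz; apply: Phat_supp => i m /nz; apply: contraNeq => ?.
by apply/existsP; exists i; rewrite lt0n.
Qed.

Lemma reduce_Z (p : P) : exists r, [/\ ideal_gen f (p - r), in_Phat z r &
  p != 0 -> ~~ zterm (LT le p) -> LT le r = LT le p /\ LC le r = LC le p].
Proof.
have monic g : g \in normalized -> LC le g = 1.
  by case/mapP=> i _ ->; apply: LC_normalized.
have zterm_div m : zterm m -> has (fun g => LT le g <= m)%MM normalized.
  case/ztermP=> i div; apply/hasP; exists ((LC le (f i))^-1 *: f i).
    exact: normalized_mem.
  by rewrite LT_normalized.
have idf := ideal_gen_ideal f; pose Q r := ideal_gen f (p - r).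
have Q_step r g m : Q r -> g \in normalized -> m \in msupp r -> zterm m ->
    (LT le g <= m)%MM -> Q (r - r@_m *: ('X_[m - LT le g] * g)).
  move=> Qr /mapP [i _ ->] _ _ _; rewrite /Q opprB addrCA addrC.
  apply: (idealD idf Qr); apply/(idealZ idf)/(idealM idf)/(idealZ idf).
  exact: ideal_gen_f.
have Qp : Q p by rewrite /Q subrr; case: idf.
have [r red] := reduction Hle monic zterm_div Q_step Qp.
exists r; split; [by case: red|by case: red => _ nz _; apply: Phat_no_zterm|].
exact: reduction_LT red.
Qed.

Lemma msupp_normalized i m :
  (m \in msupp ((LC le (f i))^-1 *: f i)) = (m \in msupp (f i)).
Proof. exact/perm_mem/msuppZ/LC_f_inv_neq0. Qed.

Theorem reduced_GB_sep :
  is_reduced_GB le (ideal_gen f) normalized -> coherently_separating z f.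
Proof.
case=> _ _ _ reduced i; have cf j : (f j)@_(U_(z j)) != 0.
  by rewrite -(LT_f j); apply: LC_neq0.
have indLin : indets (Lin (f i)) (z i) by apply/indets_LinP.
split; [split=> //|move=> j ji [m mf mz]].
- by apply/eqP=> Lin0; case: indLin => m; rewrite Lin0 msupp0.
- case=> m; rewrite mcoeff_msupp ztail_coef; have [<-|neq] := eqVneq U_(z i)%MM m.
    by rewrite mulVf // subrr eqxx.
  rewrite sub0r oppr_eq0 mulf_eq0 negb_or -mcoeff_msupp => /andP[_ mf] mz.
  case/eqP: neq; apply: (tord_anti Hle); first by apply: (tord_div Hle); rewrite lep1mP -lt0n.
  by rewrite -(LT_f i); apply: LT_max.
have neq : (LC le (f i))^-1 *: f i != (LC le (f j))^-1 *: f j.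
  apply: contra_neq ji => /(congr1 (LT le)); rewrite !LT_normalized.
  by move/eqP; rewrite eq_mnm1 => /eqP/zinj.
have := reduced _ _ (normalized_mem j) (normalized_mem i) neq m.
by rewrite msupp_normalized LT_normalized lep1mP -lt0n mz => /(_ mf).
Qed.

Lemma LT_ideal_Phat (I : P -> Prop) p : is_ideal I -> (forall i, I (f i)) ->
  I p -> p != 0 -> ~~ zterm (LT le p) ->
  exists r, [/\ restrict_Phat z I r, r != 0 & LT le r = LT le p].
Proof.
move=> II If Ip p0 nz; have [r [ipr rPhat /(_ p0 nz) [LTr LCr]]] := reduce_Z p.
have Ir : I r by rewrite -[r](subKr p); apply/(idealB II) => //; apply: ideal_gen_min ipr.
exists r; split=> //; apply: contraTneq (LC_neq0 Hle p0) => r0.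
by rewrite -LCr r0 /LC mcoeff0 eqxx.
Qed.

Theorem GB_extension (I : P -> Prop) : is_ideal I -> (forall i, I (f i)) ->
  exists gs, is_reduced_GB le (restrict_Phat z I) gs /\ is_GB le I (normalized ++ gs).
Proof.
move=> II If; have [gs gsGB] : exists gs, is_reduced_GB le (restrict_Phat z I) gs.
  apply: (exists_reduced_GB (z := z) Hle).
  - by move=> p q [Ip pPhat] [Iq qPhat]; split; [apply: idealB|apply: Phat_sub].
  - by move=> c p [Ip pPhat]; split; [apply: idealZ|apply: Phat_scale].
  - by move=> u p uPhat [Ip pPhat]; split; [apply: idealM|apply: Phat_mulX].
  - by move=> p [].
have [[gsJ gsLT] _ _ _] := gsGB; exists gs; split=> //; split.
  move=> g; rewrite mem_cat => /orP[/mapP [i _ ->]|/gsJ [[Ig _] g0]] //.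
  split; first exact: idealZ.
  by apply: (LC_eq1_neq0 (le := le)); apply: LC_normalized.
move=> p Ip p0; have [/ztermP [i div]|nz] := boolP (zterm (LT le p)).
  exists ((LC le (f i))^-1 *: f i); last by rewrite LT_normalized.
  by rewrite mem_cat normalized_mem.
have [r [Jr r0 <-]] := LT_ideal_Phat II If Ip p0 nz.
by have [g gs_g div] := gsLT r Jr r0; exists g; rewrite // mem_cat gs_g orbT.
Qed.

Hypothesis Hsep : coherently_separating z f.

Lemma LT_ideal_gen_zterm p : ideal_gen f p -> p != 0 -> zterm (LT le p).
Proof.
move=> ip p0; apply: contraT => nz; have [r [ipr rPhat /(_ p0 nz) [_ LCr]]] := reduce_Z p.
have r0 : r = 0.
  apply: (ideal_gen_Phat zinj Hsep) rPhat; rewrite -[r](subKr p).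
  by apply/(idealB (ideal_gen_ideal f)).
by move: (LC_neq0 Hle p0); rewrite -LCr r0 /LC mcoeff0 eqxx.
Qed.

Theorem sep_reduced_GB : is_reduced_GB le (ideal_gen f) normalized.
Proof.
split.
- split=> [_ /mapP [i _ ->]|p ip p0].
    split; first exact/(idealZ (ideal_gen_ideal f))/ideal_gen_f.
    by apply: (LC_eq1_neq0 (le := le)); apply: LC_normalized.
  have /ztermP [i div] := LT_ideal_gen_zterm ip p0.
  by exists ((LC le (f i))^-1 *: f i); rewrite ?normalized_mem ?LT_normalized.
- rewrite map_inj_uniq ?enum_uniq // => i j /(congr1 (LT le)).
  by rewrite !LT_normalized => /eqP; rewrite eq_mnm1 => /eqP/zinj.
- by move=> _ /mapP [i _ ->]; apply: LC_normalized.
move=> _ _ /mapP [i _ ->] /mapP [j _ ->] neq m; rewrite msupp_normalized LT_normalized.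
move=> mf; rewrite lep1mP negbK; apply/eqP; have [_ noz] := Hsep j.
by apply: (not_indets_term (noz i _) mf); apply: contra_neq neq => ->.
Qed.

End ZLeadingTerms.

Theorem proposition2p6 (K : fieldType) (n s : nat) (f : 'I_s -> {mpoly K[n]})
  (z : 'I_s -> 'I_n) :
  (1 <= s)%N ->
  (forall i, in_M (f i) /\ f i != 0) ->
  injective z ->
  let LTcond := fun le : rel 'X_{1..n} =>
    term_ordering le /\ (forall i, LT le (f i) = U_(z i)%MM) in
  let fs := fun le : rel 'X_{1..n} =>
    [seq (LC le (f i))^-1 *: f i | i <- enum 'I_s] in
  let a := coherently_separating z f in
  let b := (exists le, LTcond le) /\
    (forall le, LTcond le -> is_reduced_GB le (ideal_gen f) (fs le)) in
  let c := (exists le, LTcond le) /\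
    (forall (I : {mpoly K[n]} -> Prop) le,
       is_proper_ideal I -> (forall i, I (f i)) -> LTcond le ->
       is_reduced_GB le (ideal_gen f) (fs le) /\
       exists gs : seq {mpoly K[n]},
         is_reduced_GB le (restrict_Phat z I) gs /\ is_GB le I (fs le ++ gs)) in
  (a <-> b) /\ (b <-> c).
Proof.
move=> _ fP zinj LTcond fs a b c; have f_neq0 i : f i != 0 := (fP i).2.
have a_b : a -> b.
  move=> Hsep; split=> [|le [Hle LT_f]].
    exists (elim_le z); split; [exact: elim_le_term_ordering|exact: elim_le_LT zinj Hsep].
  exact: (sep_reduced_GB zinj Hle LT_f f_neq0 Hsep).
have b_a : b -> a.
  case=> [[le [Hle LT_f]] red]; have := red le (conj Hle LT_f).
  exact: (reduced_GB_sep zinj Hle LT_f f_neq0).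
split; split=> // [Hb|[LT_exists Hc]]; split=> //; first exact: Hb.1.
- move=> I le [II _] If [Hle LT_f]; split; first exact: Hb.2.
  exact: (GB_extension Hle LT_f f_neq0 II If).
- move=> le LTc; have fM i : in_M (f i) := (fP i).1.
  by case: (Hc _ le (ideal_gen_proper fM) (ideal_gen_f f) LTc).
Qed.
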